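(* Consider a glass (a nonequilibrium state of the system) in internal equilibrium, relaxing at fixed temperature $T_0$ and pressure $P_0$ of the medium toward the equilibrium supercooled liquid. Then during relaxation $S>S_{\text{SCL}}$, and the entropy varies in time with a unique direction: $dS(t)/dt<0$ for every nonequilibrium state during relaxation, so that $S(T_0,P_0,t)$ approaches $S_{\text{SCL}}(T_0,P_0)$ from above.
   Context: The system $\Sigma$ is in contact with a large equilibrium medium at fixed $T_0,P_0$. The system is in internal equilibrium: its entropy $S(E,V,\boldsymbol{\xi})$ is a state function of energy $E$, volume $V$ and internal variables $\boldsymbol{\xi}$, with instantaneous temperature $T(t)$, pressure $P(t)$ and affinity $\mathbf{A}(t)$ defined by $\partial S/\partial E=1/T$, $\partial S/\partial V=P/T$, $\partial S/\partial\boldsymbol{\xi}=\mathbf{A}/T$. The second law requires $d_{\text{i}}S\ge0$, and since $dS,d_{\text{e}}S,dV,d\boldsymbol{\xi}$ are independent, it yields $[T_0-T(t)]dS(t)\ge0$ (strictly for a nonequilibrium state). During relaxation at fixed medium temperature the system's temperature satisfies $T(t)>T_0$, approaching $T_0$ from above. $S_{\text{SCL}}(T_0,P_0)$ is the equilibrium supercooled-liquid entropy at the medium's $T_0,P_0$. *)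

From Stdlib Require Import Reals.
From Coquelicot Require Import Coquelicot.

From Stdlib Require Import Reals Lra.
From Coquelicot Require Import Coquelicot.
Open Scope R_scope.

(* Since T(t) > T0, the second-law inequality (T0 - T) dS > 0 forces dS < 0,
   so S is strictly decreasing along the relaxation; a strictly decreasing
   function converging to S_SCL at infinity lies strictly above its limit. *)

Lemma neg_of_neg_mul_pos (a x : R) : a < 0 -> a * x > 0 -> x < 0.
Proof. intros Ha Hax. nra. Qed.

Lemma strict_decreasing_of_derive_neg (f df : R -> R) (a : R) :
  (forall t, a <= t -> is_derive f t (df t)) ->
  (forall t, a <= t -> df t < 0) ->
  forall x y, a <= x -> x < y -> f y < f x.
Proof.
  intros Hder Hneg x y Hx Hxy.
  assert (Hin : forall t, Rmin x y <= t <= Rmax x y -> a <= t).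
  { intros t Ht. rewrite Rmin_left in Ht; lra. }
  destruct (MVT_gen f x y df) as [c [Hc Heq]].
  - intros t Ht. apply Hder, Hin. lra.
  - intros t Ht. apply continuity_pt_filterlim.
    apply (ex_derive_continuous (K := R_AbsRing) (V := R_NormedModule)).
    exists (df t). apply Hder, Hin, Ht.
  - assert (Hdc : df c < 0) by (apply Hneg, Hin; lra).
    assert (df c * (y - x) < 0) by (apply Rmult_neg_pos; lra).
    lra.
Qed.

Lemma gt_lim_of_strict_decreasing (f : R -> R) (a l : R) :
  (forall x y, a <= x -> x < y -> f y < f x) ->
  is_lim f p_infty l ->
  forall t, a <= t -> l < f t.
Proof.
  intros Hdec Hlim t Ht.
  assert (Hle : Rbar_le l (f (t + 1))).
  { apply (is_lim_le_loc f (fun _ => f (t + 1)) p_infty).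
    - exists (t + 1). intros x Hx. left. apply Hdec; lra.
    - exact Hlim.
    - apply is_lim_const. }
  simpl in Hle.
  assert (f (t + 1) < f t) by (apply Hdec; lra).
  lra.
Qed.

Theorem theorem3 (T0 P0 : R) (S_SCL : R -> R -> R) (S dS T : R -> R)
  (HdS : forall t, 0 <= t -> is_derive S t (dS t))
  (Hrelax : forall t, 0 <= t -> T t > T0)
  (Hsecond : forall t, 0 <= t -> (T0 - T t) * dS t > 0)
  (Hlim : is_lim S p_infty (S_SCL T0 P0)) :
  (forall t, 0 <= t -> dS t < 0) /\ (forall t, 0 <= t -> S t > S_SCL T0 P0).
Proof.
  assert (Hneg : forall t, 0 <= t -> dS t < 0).
  { intros t Ht. apply (neg_of_neg_mul_pos (T0 - T t)).
    - specialize (Hrelax t Ht). lra.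
    - exact (Hsecond t Ht). }
  split; [exact Hneg |].
  apply (gt_lim_of_strict_decreasing S 0); [| exact Hlim].
  exact (strict_decreasing_of_derive_neg S dS 0 HdS Hneg).
Qed.
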